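(* Let $\pi:\mathrm{G}'\to\mathrm{G}$ be a surjective group homomorphism whose kernel $\mathrm{C}=\langle c\rangle$ has order $2$. Let $\Delta=\langle(c,c)\rangle\subseteq\mathrm{G}'\times\mathrm{G}'$. Let $\mathrm{H}$ be a subgroup of $\mathrm{G}$ and $\mathrm{H}_0=\{(h,h):h\in\mathrm{H}\}$ its diagonal embedding in $\mathrm{G}\times\mathrm{G}$. Then the pull-back of $\mathrm{H}_0$ under the natural surjection $(\mathrm{G}'\times\mathrm{G}')/\Delta\to\mathrm{G}\times\mathrm{G}$ is a trivial extension of $\mathrm{H}$ by $\mathrm{C}$ (i.e. isomorphic to $\mathrm{H}\times\mathrm{C}$ as an extension).
   Context: The kernel of the natural surjection $(\mathrm{G}'\times\mathrm{G}')/\Delta\to\mathrm{G}\times\mathrm{G}$ induced by $\pi\times\pi$ is the image of $\{(1,1),(1,c)\}$, identified with $\mathrm{C}$. *)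

Record group_on (T : Type) := GroupOn {
  gmul : T -> T -> T;
  gone : T;
  ginv : T -> T;
  gmulA : forall x y z, gmul x (gmul y z) = gmul (gmul x y) z;
  gmul1 : forall x, gmul gone x = x;
  gmulV : forall x, gmul (ginv x) x = gone
}.
Arguments gmul {T} _ _ _.
Arguments gone {T} _.
Arguments ginv {T} _ _.

Definition is_hom {A B : Type} (gA : group_on A) (gB : group_on B) (f : A -> B) : Prop :=
  forall x y, f (gmul gA x y) = gmul gB (f x) (f y).

Definition is_subgroup {A : Type} (gA : group_on A) (S : A -> Prop) : Prop :=
  S (gone gA) /\ (forall x y, S x -> S y -> S (gmul gA x y)) /\
  (forall x, S x -> S (ginv gA x)).

Definition prod_mul {A B} (gA : group_on A) (gB : group_on B) (p q : A * B) : A * B :=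
  (gmul gA (fst p) (fst q), gmul gB (snd p) (snd q)).
Definition prod_one {A B} (gA : group_on A) (gB : group_on B) : A * B :=
  (gone gA, gone gB).

(* The pull-back of the diagonal H0 = {(h,h) : h in H} under
   (G' x G') -> G x G, (a,b) |-> (pi a, pi b); as a subgroup of G' x G'
   it contains Delta = <(c,c)>, and the pull-back in (G' x G')/Delta is its
   image modulo Delta. *)
Definition pullback_diag {G' G : Type} (pi : G' -> G) (H : G -> Prop) (p : G' * G') : Prop :=
  H (pi (fst p)) /\ pi (fst p) = pi (snd p).

(* Delta = <(c,c)> = {(1,1),(c,c)} (c has order 2). *)
Definition Delta {G' : Type} (gG' : group_on G') (c : G') (p : G' * G') : Prop :=
  p = (gone gG', gone gG') \/ p = (c, c).

Definition Cgrp {G' : Type} (gG' : group_on G') (c : G') (x : G') : Prop :=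
  x = gone gG' \/ x = c.

(* "The pull-back P/Delta is a trivial extension of H by C", i.e. there is
   an isomorphism P/Delta ~ H x C of extensions: it is phrased through a
   homomorphism phi : P -> H x C with kernel exactly Delta (so it induces an
   injective map on P/Delta), onto H x C, compatible with the projection
   P/Delta -> H, [(a,b)] |-> pi a, and with the inclusion
   C -> P/Delta, c |-> [(1,c)]. *)
Definition trivial_extension_pullback {G' G : Type}
    (gG' : group_on G') (gG : group_on G) (pi : G' -> G) (c : G') (H : G -> Prop) : Prop :=
  let P := pullback_diag pi H in
  exists phi : G' * G' -> G * G',
    (forall p q, P p -> P q ->
        phi (prod_mul gG' gG' p q) = prod_mul gG gG' (phi p) (phi q)) /\
    (forall p, P p -> fst (phi p) = pi (fst p) /\ Cgrp gG' c (snd (phi p))) /\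
    (forall p, P p -> (phi p = prod_one gG gG' <-> Delta gG' c p)) /\
    (forall h x, H h -> Cgrp gG' c x -> exists p, P p /\ phi p = (h, x)) /\
    (forall x, Cgrp gG' c x -> phi (gone gG', x) = (gone gG, x)).


(* The kernel C = {1, c} is normal of order at most 2, hence central.  On the
   pull-back P = {(a, b) : pi a = pi b, pi a in H} the map
   (a, b) |-> (pi a, a^-1 b) lands in G x C, and it is multiplicative because
   the factor a^-1 b in C commutes with everything; its kernel is
   {(a, a) : a in C} = Delta and (1, x) |-> (1, x), so it identifies P / Delta
   with H x C as an extension. *)

Section GroupFacts.

Context {T : Type} (g : group_on T).

Lemma gmulrV x : gmul g x (ginv g x) = gone g.
Proof.
  set (y := gmul g x (ginv g x)).
  assert (y_idem : gmul g y y = y).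
  { unfold y. rewrite <- (gmulA _ g x), (gmulA _ g (ginv g x) x), gmulV, gmul1.
    reflexivity. }
  rewrite <- (gmul1 _ g y), <- (gmulV _ g y), <- gmulA, y_idem. reflexivity.
Qed.

Lemma gmulr1 x : gmul g x (gone g) = x.
Proof. rewrite <- (gmulV _ g x), gmulA, gmulrV, gmul1. reflexivity. Qed.

Lemma gmulKV a x : gmul g (ginv g a) (gmul g a x) = x.
Proof. rewrite gmulA, gmulV, gmul1. reflexivity. Qed.

Lemma gmulI a x y : gmul g a x = gmul g a y -> x = y.
Proof.
  intro E. rewrite <- (gmulKV a x), <- (gmulKV a y), E. reflexivity.
Qed.

Lemma ginv_unique a b : gmul g a b = gone g -> a = ginv g b.
Proof.
  intro E. rewrite <- (gmulr1 a), <- (gmulrV b), gmulA, E, gmul1. reflexivity.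
Qed.

Lemma ginv1 : ginv g (gone g) = gone g.
Proof. symmetry. apply ginv_unique, gmul1. Qed.

Lemma ginvM x y : ginv g (gmul g x y) = gmul g (ginv g y) (ginv g x).
Proof.
  symmetry. apply ginv_unique.
  rewrite <- gmulA, (gmulA _ g (ginv g x) x y), gmulV, gmul1. apply gmulV.
Qed.

Lemma eq_gmulV1 a b : a = b <-> gmul g (ginv g a) b = gone g.
Proof.
  split.
  - intros <-. apply gmulV.
  - intro E. apply (gmulI (ginv g a)). rewrite E. apply gmulV.
Qed.

End GroupFacts.

Section Homomorphisms.

Context {A B : Type} (gA : group_on A) (gB : group_on B) (f : A -> B).
Hypothesis f_hom : is_hom gA gB f.

Lemma hom_gone : f (gone gA) = gone gB.
Proof.
  apply (gmulI gB (f (gone gA))).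
  rewrite <- f_hom, gmul1, gmulr1. reflexivity.
Qed.

Lemma hom_ginv x : f (ginv gA x) = ginv gB (f x).
Proof. apply ginv_unique. rewrite <- f_hom, gmulV. apply hom_gone. Qed.

Lemma hom_eq_gmulV a b : f a = f b -> f (gmul gA (ginv gA a) b) = gone gB.
Proof. intro E. rewrite f_hom, hom_ginv, E. apply gmulV. Qed.

End Homomorphisms.

Section PullbackSplitting.

Context {G' G : Type} (gG' : group_on G') (gG : group_on G).
Variables (pi : G' -> G) (c : G').
Hypothesis pi_hom : is_hom gG' gG pi.
Hypothesis ker_pi : forall x : G', pi x = gone gG <-> Cgrp gG' c x.

Lemma Cgrp_central k x : Cgrp gG' c k -> gmul gG' k x = gmul gG' x k.
Proof.
  assert (pi_c : pi c = gone gG) by (apply ker_pi; right; reflexivity).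
  assert (conj_c : Cgrp gG' c (gmul gG' (ginv gG' x) (gmul gG' c x))).
  { apply ker_pi. rewrite !pi_hom, (hom_ginv _ _ _ pi_hom), pi_c, gmul1.
    apply gmulV. }
  intros [-> | ->].
  - rewrite gmul1, gmulr1. reflexivity.
  - apply (gmulI gG' (ginv gG' x)). rewrite gmulKV.
    destruct conj_c as [conj_1 | ->]; [| reflexivity].
    rewrite conj_1. apply eq_gmulV1 in conj_1.
    rewrite <- (gmulr1 gG' c), <- (gmulrV gG' x), gmulA, <- conj_1. reflexivity.
Qed.

Lemma fiber_gmulV_in_C a b : pi a = pi b -> Cgrp gG' c (gmul gG' (ginv gG' a) b).
Proof. intro E. apply ker_pi, (hom_eq_gmulV _ _ _ pi_hom), E. Qed.

Definition split_pullback (p : G' * G') : G * G' :=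
  (pi (fst p), gmul gG' (ginv gG' (fst p)) (snd p)).

Lemma split_pullback_morph p q :
  pi (fst p) = pi (snd p) ->
  split_pullback (prod_mul gG' gG' p q)
  = prod_mul gG gG' (split_pullback p) (split_pullback q).
Proof.
  destruct p as [a b], q as [a' b']. simpl. intro E.
  unfold split_pullback, prod_mul. simpl. rewrite pi_hom, ginvM. f_equal.
  rewrite <- gmulA, (gmulA _ gG' (ginv gG' a) b b'), gmulA,
    <- (Cgrp_central _ (ginv gG' a') (fiber_gmulV_in_C _ _ E)), <- gmulA.
  reflexivity.
Qed.

Lemma split_pullback_eq1 p : split_pullback p = prod_one gG gG' <-> Delta gG' c p.
Proof.
  destruct p as [a b]. unfold split_pullback, prod_one, Delta. simpl. split.
  - intro E. injection E as pi_a ab. apply eq_gmulV1 in ab. subst b.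
    apply ker_pi in pi_a. destruct pi_a as [-> | ->]; [left | right]; reflexivity.
  - intros [E | E]; injection E as -> ->; rewrite gmulV; f_equal.
    + apply (hom_gone _ _ _ pi_hom).
    + apply ker_pi. right. reflexivity.
Qed.

Lemma split_pullback_onto (H : G -> Prop) h x :
  (forall y : G, exists a : G', pi a = y) -> H h -> Cgrp gG' c x ->
  exists p, pullback_diag pi H p /\ split_pullback p = (h, x).
Proof.
  intros pi_surj Hh Cx. destruct (pi_surj h) as [a <-].
  exists (a, gmul gG' a x). unfold pullback_diag, split_pullback. simpl.
  rewrite pi_hom, (proj2 (ker_pi x) Cx), gmulr1, gmulKV.
  split; [split; [exact Hh | reflexivity] | reflexivity].
Qed.

Lemma split_pullback_C x : split_pullback (gone gG', x) = (gone gG, x).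
Proof.
  unfold split_pullback. simpl. rewrite ginv1, gmul1, (hom_gone _ _ _ pi_hom).
  reflexivity.
Qed.

End PullbackSplitting.

Theorem lemma3p5 (G' G : Type) (gG' : group_on G') (gG : group_on G)
    (pi : G' -> G) (c : G') (H : G -> Prop)
    (pi_hom : is_hom gG' gG pi)
    (pi_surj : forall y : G, exists x : G', pi x = y)
    (c_ne1 : c <> gone gG')
    (c_order2 : gmul gG' c c = gone gG')
    (ker_pi : forall x : G', pi x = gone gG <-> Cgrp gG' c x)
    (H_sub : is_subgroup gG H) :
  trivial_extension_pullback gG' gG pi c H.
Proof.
  exists (split_pullback gG' pi).
  split; [| split; [| split; [| split]]].
  - intros p q [_ fiber_p] _. exact (split_pullback_morph _ _ _ _ pi_hom ker_pi _ _ fiber_p).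
  - intros p [_ fiber_p]. split; [reflexivity |].
    exact (fiber_gmulV_in_C _ _ _ _ pi_hom ker_pi _ _ fiber_p).
  - intros p _. exact (split_pullback_eq1 _ _ _ _ pi_hom ker_pi p).
  - intros h x Hh Cx. exact (split_pullback_onto _ _ _ _ pi_hom ker_pi H h x pi_surj Hh Cx).
  - intros x _. exact (split_pullback_C _ _ _ pi_hom x).
Qed.
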